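(* Let $X$ be a topological space. Then the uniform space $(C(X),\mathcal{U}_\Gamma)$ is complete.
   Context: $C(X)$ is the set of continuous real-valued functions on $X$. $LSC(X,(0,1))$ is the set of lower semicontinuous functions $X\to(0,1)$. For $\epsilon\in LSC(X,(0,1))$ let $B(\epsilon)=\{(f,g)\in C(X)\times C(X): |f(x)-g(x)|<\epsilon(x)\ \forall x\in X\}$. The uniformity $\mathcal{U}_\Gamma$ on $C(X)$ is the uniformity having $\{B(\epsilon):\epsilon\in LSC(X,(0,1))\}$ as a base; it induces the graph topology on $C(X)$ (the topology with base the sets $\{f\in C(X): \text{graph}(f)\subset G\}$, $G$ open in $X\times\mathbb{R}$). *)

From Stdlib Require Import Reals.
Open Scope R_scope.

Record TopSpace := {
  carrier :> Type;
  is_open : (carrier -> Prop) -> Prop;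
  open_full : is_open (fun _ => True);
  open_inter : forall U V, is_open U -> is_open V -> is_open (fun x => U x /\ V x);
  open_union : forall (F : (carrier -> Prop) -> Prop),
      (forall U, F U -> is_open U) -> is_open (fun x => exists U, F U /\ U x)
}.

Definition R_open (U : R -> Prop) : Prop :=
  forall x, U x -> exists d, 0 < d /\ forall y, Rabs (y - x) < d -> U y.

Definition continuous_on {X : TopSpace} (f : X -> R) : Prop :=
  forall U, R_open U -> is_open X (fun x => U (f x)).

Definition CX (X : TopSpace) : Type := { f : X -> R | continuous_on f }.

Definition LSC01 {X : TopSpace} (e : X -> R) : Prop :=
  (forall x, 0 < e x /\ e x < 1) /\
  (forall r, is_open X (fun x => r < e x)).

Definition B {X : TopSpace} (e : X -> R) (f g : CX X) : Prop :=
  forall x, Rabs (proj1_sig f x - proj1_sig g x) < e x.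

Definition is_filter {T : Type} (F : (T -> Prop) -> Prop) : Prop :=
  F (fun _ => True) /\
  ~ F (fun _ => False) /\
  (forall A B, F A -> F B -> F (fun t => A t /\ B t)) /\
  (forall A B : T -> Prop, (forall t, A t -> B t) -> F A -> F B).

(* Cauchy filter for the uniformity U_Gamma (generated by the base B(eps)). *)
Definition cauchy_Gamma {X : TopSpace} (F : (CX X -> Prop) -> Prop) : Prop :=
  forall e, LSC01 e -> exists A, F A /\ forall f g, A f -> A g -> B e f g.

Definition converges_Gamma {X : TopSpace} (F : (CX X -> Prop) -> Prop) (f : CX X) : Prop :=
  forall e, LSC01 e -> F (fun g => B e f g).

Definition complete_Gamma (X : TopSpace) : Prop :=
  forall F : (CX X -> Prop) -> Prop,
    is_filter F -> cauchy_Gamma F -> exists f, converges_Gamma F f.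

From Stdlib Require Import Reals Lra Classical ClassicalEpsilon FunctionalExtensionality PropExtensionality.
Open Scope R_scope.

(* A Cauchy filter F for U_Gamma is in particular Cauchy for the uniform
   metric, since constant functions c in (0,1) are lower semicontinuous.
   Choosing, for the scale c_n = 1/(n+2), a set A_n in F of B(c_n)-small
   diameter and a point f_n of A_n, the f_n form a uniformly Cauchy sequence;
   its pointwise limit h is a uniform limit of continuous functions and hence
   continuous.  Finally, for an arbitrary lower semicontinuous e, a set A in F
   of B(e/2)-small diameter lies inside B(e)[h]: at each point x compare g in
   A with a common element k of A and A_N, where c_N is small compared to e(x). *)

Lemma open_ext (X : TopSpace) (P Q : X -> Prop) :
  (forall x, P x <-> Q x) -> is_open X P -> is_open X Q.
Proof.
  intros HPQ HP.
  replace Q with P; [exact HP|].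
  apply functional_extensionality; intro x.
  apply propositional_extensionality, HPQ.
Qed.

Lemma open_empty (X : TopSpace) : is_open X (fun _ => False).
Proof.
  eapply open_ext; [|apply (open_union X (fun _ => False)); tauto].
  intro x; split; [intros [U [[] _]] | tauto].
Qed.

(* A set is open as soon as each of its points has an open neighbourhood
   inside it: it is the union of all open subsets of itself. *)
Lemma open_of_local (X : TopSpace) (P : X -> Prop) :
  (forall x, P x -> exists W, is_open X W /\ W x /\ forall y, W y -> P y) ->
  is_open X P.
Proof.
  intros Hloc.
  eapply open_ext;
    [|apply (open_union X (fun W => is_open X W /\ forall y, W y -> P y)); tauto].
  intro x; split.
  - intros [W [[_ HWP] Wx]]; auto.
  - intros Px; destruct (Hloc x Px) as [W [HW [Wx HWP]]]; eauto.
Qed.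

Lemma ball_open (a r : R) : R_open (fun y => Rabs (y - a) < r).
Proof.
  intros x Hx; exists (r - Rabs (x - a)); split; [lra|].
  intros y Hy; pose proof (Rdist_tri y a x); unfold Rdist in *; lra.
Qed.

(* Constant gauges with values in (0,1) are lower semicontinuous; this is
   what makes U_Gamma finer than the uniform metric. *)
Lemma const_LSC (X : TopSpace) (c : R) : 0 < c < 1 -> @LSC01 X (fun _ => c).
Proof.
  intros Hc; split; [auto|].
  intro r; destruct (Rlt_dec r c).
  - eapply open_ext; [|apply open_full]; intro; split; auto.
  - eapply open_ext; [|apply open_empty]; intro; split; [tauto|lra].
Qed.

Lemma half_LSC (X : TopSpace) (e : X -> R) : LSC01 e -> LSC01 (fun x => e x / 2).
Proof.
  intros [Hbnd Hopen]; split.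
  - intro x; specialize (Hbnd x); lra.
  - intro r; eapply open_ext; [|apply (Hopen (2 * r))]; intro x; split; lra.
Qed.

Lemma filter_meet {T : Type} (F : (T -> Prop) -> Prop) (A A' : T -> Prop) :
  is_filter F -> F A -> F A' -> exists t, A t /\ A' t.
Proof.
  intros [_ [Hproper [Hinter Hup]]] HA HA'.
  apply NNPP; intro Hdisj; apply Hproper.
  apply (Hup (fun t => A t /\ A' t)); [|auto].
  intros t Ht; apply Hdisj; eauto.
Qed.

Definition scale (n : nat) : R := / (INR n + 2).

Lemma scale_bounds n : 0 < scale n < 1.
Proof.
  unfold scale; pose proof (pos_INR n); split.
  - apply Rinv_0_lt_compat; lra.
  - rewrite <- Rinv_1; apply Rinv_lt_contravar; lra.
Qed.

Lemma scale_antitone n m : (n <= m)%nat -> scale m <= scale n.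
Proof.
  intro Hnm; unfold scale; apply le_INR in Hnm; pose proof (pos_INR n).
  apply Rinv_le_contravar; lra.
Qed.

Lemma scale_small d : 0 < d -> exists N, forall n, (N <= n)%nat -> scale n < d.
Proof.
  intro Hd; destruct (archimed_cor1 d Hd) as [N [HN HN0]].
  exists N; intros n Hn.
  apply Rle_lt_trans with (scale N); [now apply scale_antitone|].
  apply Rlt_trans with (/ INR N); [|exact HN].
  apply lt_0_INR in HN0; unfold scale; apply Rinv_lt_contravar; nra.
Qed.

Lemma uniform_limit {T : Type} (u : nat -> T -> R) :
  (forall n m x, Rabs (u n x - u m x) < scale n + scale m) ->
  exists h : T -> R, forall n x, Rabs (u n x - h x) < 3 * scale n.
Proof.
  intros Hcau.
  assert (Hcrit : forall x, Cauchy_crit (fun n => u n x)).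
  { intros x eps Heps.
    destruct (scale_small (eps / 2)) as [N HN]; [lra|].
    exists N; intros n m Hn Hm; unfold Rdist.
    specialize (Hcau n m x); pose proof (HN n Hn); pose proof (HN m Hm); lra. }
  exists (fun x => proj1_sig (R_complete _ (Hcrit x))); intros n x.
  destruct (R_complete _ (Hcrit x)) as [l Hl]; simpl.
  destruct (Hl (scale n) (proj1 (scale_bounds n))) as [N HN].
  set (M := Nat.max N n).
  specialize (HN M (Nat.le_max_l _ _)); unfold Rdist in HN.
  pose proof (Hcau n M x); pose proof (scale_antitone n M (Nat.le_max_r _ _)).
  pose proof (Rdist_tri (u n x) l (u M x)); unfold Rdist in *; lra.
Qed.

Lemma uniform_limit_continuous (X : TopSpace) (h : X -> R) :
  (forall d, 0 < d -> exists g : CX X, forall x, Rabs (proj1_sig g x - h x) < d) ->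
  continuous_on h.
Proof.
  intros Happrox U HU; apply open_of_local; intros x Ux.
  destruct (HU (h x) Ux) as [d [Hd HdU]].
  destruct (Happrox (d / 3)) as [[g Hg] Hgh]; [lra|]; simpl in Hgh.
  exists (fun y => Rabs (g y - g x) < d / 3); repeat split.
  - exact (Hg _ (ball_open (g x) (d / 3))).
  - rewrite Rminus_diag, Rabs_R0; lra.
  - intros y Hy; apply HdU.
    pose proof (Hgh x); pose proof (Hgh y).
    pose proof (Rdist_tri (h y) (h x) (g y)).
    pose proof (Rdist_tri (g y) (h x) (g x)).
    pose proof (Rdist_sym (h y) (g y)).
    unfold Rdist in *; lra.
Qed.

Section CauchyFilter.

Variable X : TopSpace.
Variable F : (CX X -> Prop) -> Prop.
Hypothesis F_filter : is_filter F.
Hypothesis F_cauchy : cauchy_Gamma F.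

Lemma cauchy_approximants :
  exists (f : nat -> CX X) (A : nat -> CX X -> Prop),
    forall n, F (A n) /\
      forall k, A n k -> forall x, Rabs (proj1_sig (f n) x - proj1_sig k x) < scale n.
Proof.
  assert (Hstage : forall n, exists p : CX X * (CX X -> Prop), F (snd p) /\
      forall k, snd p k -> forall x, Rabs (proj1_sig (fst p) x - proj1_sig k x) < scale n).
  { intro n.
    destruct (F_cauchy _ (const_LSC X _ (scale_bounds n))) as [A [HA Hsmall]].
    destruct (filter_meet F A A F_filter HA HA) as [f [Hf _]].
    exists (f, A); split; [exact HA|]; intros k Hk x; exact (Hsmall f k Hf Hk x). }
  set (p n := proj1_sig (constructive_indefinite_description _ (Hstage n))).
  exists (fun n => fst (p n)), (fun n => snd (p n)); intro n.
  unfold p; destruct constructive_indefinite_description; auto.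
Qed.

Variable f : nat -> CX X.
Variable A : nat -> CX X -> Prop.
Hypothesis f_approx : forall n, F (A n) /\
  forall k, A n k -> forall x, Rabs (proj1_sig (f n) x - proj1_sig k x) < scale n.

(* The chosen points form a uniformly Cauchy sequence, since A_n and A_m meet. *)
Lemma approximants_cauchy n m x :
  Rabs (proj1_sig (f n) x - proj1_sig (f m) x) < scale n + scale m.
Proof.
  destruct (f_approx n) as [Hn Hfn], (f_approx m) as [Hm Hfm].
  destruct (filter_meet F _ _ F_filter Hn Hm) as [k [Hkn Hkm]].
  pose proof (Hfn k Hkn x); pose proof (Hfm k Hkm x).
  pose proof (Rdist_tri (proj1_sig (f n) x) (proj1_sig (f m) x) (proj1_sig k x)).
  pose proof (Rdist_sym (proj1_sig k x) (proj1_sig (f m) x)).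
  unfold Rdist in *; lra.
Qed.

Variable h : X -> R.
Hypothesis h_limit : forall n x, Rabs (proj1_sig (f n) x - h x) < 3 * scale n.

Lemma limit_continuous : continuous_on h.
Proof.
  apply uniform_limit_continuous; intros d Hd.
  destruct (scale_small (d / 3)) as [N HN]; [lra|].
  exists (f N); intro x; specialize (HN N (le_n N)); specialize (h_limit N x); lra.
Qed.

(* F converges to h: a set of B(e/2)-small diameter in F lies in B(e)[h]. *)
Lemma filter_converges_to_limit (hc : continuous_on h) :
  converges_Gamma F (exist _ h hc).
Proof.
  intros e He.
  destruct (F_cauchy _ (half_LSC X e He)) as [A' [HA' Hsmall]].
  destruct F_filter as [_ [_ [_ Hup]]].
  apply (Hup A'); [|exact HA']; intros g Hg x; simpl.
  pose proof (proj1 (proj1 He x)).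
  destruct (scale_small (e x / 8)) as [N HN]; [lra|]; specialize (HN N (le_n N)).
  destruct (f_approx N) as [HAN HfN].
  destruct (filter_meet F _ _ F_filter HA' HAN) as [k [Hk' HkN]].
  pose proof (Hsmall g k Hg Hk' x); pose proof (HfN k HkN x); pose proof (h_limit N x).
  pose proof (Rdist_tri (h x) (proj1_sig g x) (proj1_sig (f N) x)).
  pose proof (Rdist_tri (proj1_sig (f N) x) (proj1_sig g x) (proj1_sig k x)).
  pose proof (Rdist_sym (h x) (proj1_sig (f N) x)).
  pose proof (Rdist_sym (proj1_sig k x) (proj1_sig g x)).
  unfold B, Rdist in *; simpl in *; lra.
Qed.

End CauchyFilter.

Theorem proposition1p3 (X : TopSpace) : complete_Gamma X.
Proof.
  intros F HF HC.
  destruct (cauchy_approximants X F HF HC) as [f [A Happrox]].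
  destruct (uniform_limit (fun n => proj1_sig (f n)))
    as [h Hh]; [exact (approximants_cauchy X F HF f A Happrox)|].
  set (hc := limit_continuous X f h Hh).
  exists (exist _ h hc).
  exact (filter_converges_to_limit X F HF HC f A Happrox h Hh hc).
Qed.
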